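(* Let $K=\mathrm{SU}(2)$ and $\mathcal{M}=\{(g_1,h_1,g_2,h_2)\in K^4:[g_1,h_1][g_2,h_2]=I\}/K$. The subset $$\{(g,h,khk^{-1},kgk^{-1})\in K^4 : [g,h]=-I,\ k^2=-I\}/K$$ of $\mathcal{M}$ is homeomorphic to $\mathbb{P}^2(\mathbb{R})$.
   Context: $[a,b]=aba^{-1}b^{-1}$; $K$ acts by simultaneous conjugation and $\mathcal{M}$ carries the quotient topology. *)

From HB Require Import structures.
From mathcomp Require Import all_boot all_order all_algebra.
From mathcomp Require Import all_classical all_reals all_analysis.
From mathcomp Require Import complex.
Import numFieldNormedType.Exports.
Import Order.TTheory GRing.Theory Num.Theory.

Set Implicit Arguments.
Unset Strict Implicit.
Unset Printing Implicit Defensive.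

Local Open Scope classical_set_scope.
Local Open Scope ring_scope.

Notation cpx := complex.complex.

Definition cpx_to_pair (R : realType) (z : cpx R) : R * R :=
  (complex.Re z, complex.Im z).

HB.instance Definition _ (R : realType) :=
  Topological.copy (cpx R) (initial_topology (@cpx_to_pair R)).

Section QuotientSpace.
Context {X : topologicalType} (r : X -> X -> Prop).

Definition qspace := {A : set X | exists x, A = [set y | r x y]}.

Definition qpi (x : X) : qspace :=
  exist _ [set y | r x y] (ex_intro _ x erefl).

HB.instance Definition _ := gen_eqMixin qspace.
HB.instance Definition _ := gen_choiceMixin qspace.

Definition qspace_open (U : set qspace) := open (qpi @^-1` U).

Lemma qspace_openT : qspace_open [set: qspace].
Proof. by rewrite /qspace_open preimage_setT; exact: openT. Qed.

Lemma qspace_openI : setI_closed qspace_open.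
Proof. by move=> ? ? ? ?; exact: openI. Qed.

Lemma qspace_open_bigU (I : Type) (f : I -> set qspace) :
  (forall i, qspace_open (f i)) -> qspace_open (\bigcup_i f i).
Proof. by move=> ofi; apply: bigcup_open => i _; exact: ofi. Qed.

HB.instance Definition _ :=
  @isOpenTopological.Build qspace qspace_open
    qspace_openT qspace_openI qspace_open_bigU.

End QuotientSpace.

Definition homeomorphic (X Y : topologicalType) : Prop :=
  exists (f : X -> Y) (g : Y -> X),
    [/\ cancel f g, cancel g f, continuous f & continuous g].

Section SU2.
Variable R : realType.

Local Notation M2 := 'M[cpx R]_2.

Definition conjT (A : M2) : M2 := (map_mx (@complex.conjc R) A)^T.

Definition SU2_set : set M2 := [set A | A *m conjT A = 1 /\ \det A = 1].
Definition SU2 := set_type SU2_set.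

Definition commut (a b : M2) : M2 := a * b * a^-1 * b^-1.

Definition K4 := (SU2 * SU2 * SU2 * SU2)%type.

Definition g1 (x : K4) : M2 := set_val x.1.1.1.
Definition h1 (x : K4) : M2 := set_val x.1.1.2.
Definition g2 (x : K4) : M2 := set_val x.1.2.
Definition h2 (x : K4) : M2 := set_val x.2.

Definition Hom_set : set K4 :=
  [set x | commut (g1 x) (h1 x) * commut (g2 x) (h2 x) = 1].
Definition Hom := set_type Hom_set.

Definition conj_rel (x y : Hom) : Prop :=
  exists k : SU2, let kk := set_val k in
    [/\ g1 (set_val y) = kk * g1 (set_val x) * kk^-1,
        h1 (set_val y) = kk * h1 (set_val x) * kk^-1,
        g2 (set_val y) = kk * g2 (set_val x) * kk^-1 &
        h2 (set_val y) = kk * h2 (set_val x) * kk^-1].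

Definition Moduli := qspace conj_rel.

Definition special_set : set K4 :=
  [set x | exists k : SU2, let kk := set_val k in
     [/\ commut (g1 x) (h1 x) = -1, kk * kk = -1,
         g2 x = kk * h1 x * kk^-1 & h2 x = kk * g1 x * kk^-1]].

Definition special_image : set Moduli :=
  [set q | exists x : Hom, special_set (set_val x) /\ q = qpi conj_rel x].

Definition SpecialSubspace := set_type special_image.

End SU2.

Section RP2.
Variable R : realType.

Definition S2_set : set 'rV[R]_3 := [set v | \sum_(i < 3) v 0 i ^+ 2 = 1].
Definition S2 := set_type S2_set.

Definition antipodal_rel (x y : S2) : Prop :=
  set_val y = set_val x \/ set_val y = - set_val x.

Definition RP2 := qspace antipodal_rel.
End RP2.

From HB Require Import structures.
From Pilot Require Import Defs.
From mathcomp Require Import all_boot all_order all_algebra.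
From mathcomp Require Import all_classical all_reals all_analysis.
From mathcomp Require Import complex ring lra.
Import numFieldNormedType.Exports.
Import Order.TTheory GRing.Theory Num.Theory.

Set Implicit Arguments.
Unset Strict Implicit.
Unset Printing Implicit Defensive.

Local Open Scope classical_set_scope.
Local Open Scope ring_scope.

(* SU(2) is the group of unit quaternions a + b i + c j + d k.  If [g, h] = -1
   then g and h anticommute, which forces them to be orthogonal purely
   imaginary units, so one conjugation sends (g, h) to (i, j) and the element
   of the definition squaring to -1 to a purely imaginary unit v.  Hence every
   point of the subset is the class of (i, j, v j v^-1, v i v^-1) for some v
   in S^2, and v, -v give the same class.  Conversely the class determines v
   up to sign: the real traces Re tr (x y), for x among (h2, g2, h2 g2) and y
   among (g1, h1, g1 h1), are invariant under conjugation and form the matrix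
   2 - 4 v^T v at the normal form.  This gives a continuous bijection from
   RP^2 onto the subset, which is Hausdorff since the same traces embed it
   continuously into the real 3 x 3 matrices; as RP^2 is compact, the
   bijection is a homeomorphism. *)

Lemma ord2P (i : 'I_2) : i = 0 \/ i = 1.
Proof. by case: i => [[|[|//]]] ?; [left | right]; apply: val_inj. Qed.

Lemma mx2_eq (T : Type) (A B : 'M[T]_2) : A 0 0 = B 0 0 -> A 0 1 = B 0 1 ->
  A 1 0 = B 1 0 -> A 1 1 = B 1 1 -> A = B.
Proof.
move=> e00 e01 e10 e11; apply/matrixP => i j.
by case: (ord2P i) => ->; case: (ord2P j) => ->.
Qed.

Lemma big_ord2 (V : nmodType) (F : 'I_2 -> V) : \sum_(i < 2) F i = F 0 + F 1.
Proof. by rewrite !big_ord_recl big_ord0 addr0; congr (_ + F _); apply: val_inj. Qed.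

Lemma det_mx2 (F : comRingType) (A : 'M[F]_2) :
  \det A = A 0 0 * A 1 1 - A 0 1 * A 1 0.
Proof.
rewrite (expand_det_row _ 0) !big_ord_recl big_ord0 /cofactor !det_mx11 !mxE /=.
rewrite expr0 expr1 mul1r addr0 mulN1r mulrN.
by congr (A _ _ * A _ _ - A _ _ * A _ _); apply: val_inj.
Qed.

(* For the unitary matrix [[p, q], [r, s]] of determinant 1, with pc and qc
   the conjugates of p and q. *)
Lemma second_row_eq (F : comRingType) (p q r s pc qc : F) :
  p * pc + q * qc = 1 -> r * pc + s * qc = 0 -> p * s - q * r = 1 ->
  s = pc /\ r = - qc.
Proof.
move=> e00 e10 det1; split.
- transitivity (s * (p * pc + q * qc) - pc * (p * s - q * r) - q * (r * pc + s * qc) + pc).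
    by rewrite e00 det1 e10; ring.
  by ring.
- transitivity (r * (p * pc + q * qc) - p * (r * pc + s * qc) + qc * (p * s - q * r) - qc).
    by rewrite e00 det1 e10; ring.
  by ring.
Qed.

Lemma outer_eq_sign (F : idomainType) n (v w : 'rV[F]_n) :
  v^T *m v = w^T *m w -> w = v \/ w = - v.
Proof.
move=> /matrixP e.
have vw i j : v 0 i * v 0 j = w 0 i * w 0 j.
  by move: (e i j); rewrite !mxE !big_ord1 !mxE.
have [v0 | [i vi]] : v = 0 \/ exists i, v 0 i != 0.
- case: (pselect (exists i, v 0 i != 0)) => [|nv]; first by right.
  left; apply/rowP => i; rewrite mxE; apply/eqP; apply: contrapT => vi.
  by apply: nv; exists i; apply/negP.
- left; rewrite v0; apply/rowP => j; rewrite mxE; apply/eqP.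
  by rewrite -sqrf_eq0 expr2 -vw v0 mxE mul0r.
- have : w 0 i ^+ 2 = v 0 i ^+ 2 by rewrite !expr2 vw.
  move/eqP; rewrite eqf_sqr => /orP [/eqP wi | /eqP wi]; [left | right];
    apply/rowP => j; rewrite ?mxE; apply: (mulfI vi).
    by rewrite vw wi.
  by rewrite mulrN vw wi mulNr opprK.
Qed.

Lemma ord3P (i : 'I_3) : [\/ i = 0, i = 1 | i = 2].
Proof.
by case: i => [[|[|[|//]]]] ?; [constructor 1 | constructor 2 | constructor 3];
  apply: val_inj.
Qed.

Lemma continuousT_comp (X Y Z : topologicalType) (f : X -> Y) (g : Y -> Z) :
  continuous f -> continuous g -> continuous (g \o f).
Proof. by move=> cf cg x; apply: continuous_comp; [exact: cf | exact: cg]. Qed.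

Lemma fst_continuous (X Y : topologicalType) : continuous (@fst X Y).
Proof. by case=> x y; exact: cvg_fst. Qed.

Lemma snd_continuous (X Y : topologicalType) : continuous (@snd X Y).
Proof. by case=> x y; exact: cvg_snd. Qed.

Lemma pair_continuous (X Y Z : topologicalType) (f : X -> Y) (g : X -> Z) :
  continuous f -> continuous g -> continuous (fun x => (f x, g x)).
Proof. by move=> cf cg x; apply: cvg_pair; [exact: cf | exact: cg]. Qed.

Lemma mx_entry_continuous (T : topologicalType) m n (i : 'I_m) (j : 'I_n) :
  continuous (fun M : 'M[T]_(m, n) => M i j).
Proof.
move=> M A /= MA; exists (fun i' j' => if (i' == i) && (j' == j) then A else setT).
  by move=> i' j'; case: ifP => [/andP [/eqP -> /eqP ->] // | _]; exact: filterT.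
by move=> N /(_ i j); rewrite !eqxx.
Qed.

Lemma continuous_mx (X T : topologicalType) m n (f : X -> 'M[T]_(m, n)) :
  (forall i j, continuous (fun x => f x i j)) -> continuous f.
Proof.
move=> cf x A [P xP PA].
have : \forall y \near x, forall ij : 'I_m * 'I_n, P ij.1 ij.2 (f y ij.1 ij.2).
  by apply: filter_forall => -[i j]; exact: (cf i j x _ (xP i j)).
by apply: filterS => y Py; apply: PA => i j; exact: (Py (i, j)).
Qed.

Section ComplexContinuity.
Variables (R : realType) (X : topologicalType).
Local Notation C := (cpx R).
Local Open Scope complex_scope.
Implicit Types f g : X -> C.

Lemma Re_continuous : continuous (@complex.Re R : C -> R).
Proof.
exact: continuousT_comp (@initial_continuous C _ (@cpx_to_pair R)) (@fst_continuous _ _).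
Qed.

Lemma Im_continuous : continuous (@complex.Im R : C -> R).
Proof.
exact: continuousT_comp (@initial_continuous C _ (@cpx_to_pair R)) (@snd_continuous _ _).
Qed.

Lemma continuous_complex f :
  continuous (fun x => complex.Re (f x)) -> continuous (fun x => complex.Im (f x)) ->
  continuous f.
Proof.
by move=> cre cim; apply: (@continuous_comp_initial _ _ _ (@cpx_to_pair R)); exact: pair_continuous.
Qed.

Lemma continuous_Re f : continuous f -> continuous (fun x => complex.Re (f x)).
Proof. by move=> cf; exact: continuousT_comp cf Re_continuous. Qed.

Lemma continuous_Im f : continuous f -> continuous (fun x => complex.Im (f x)).
Proof. by move=> cf; exact: continuousT_comp cf Im_continuous. Qed.

Lemma continuous_complexD f g : continuous f -> continuous g ->
  continuous (fun x => f x + g x).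
Proof.
move=> cf cg; have [rf rg] := (continuous_Re cf, continuous_Re cg).
have [jf jg] := (continuous_Im cf, continuous_Im cg).
apply: continuous_complex => x.
- have -> : (fun x => complex.Re (f x + g x)) = (fun x => complex.Re (f x) + complex.Re (g x)).
    by apply: funext => y; case: (f y) => ? ?; case: (g y).
  exact: continuousD (rf x) (rg x).
- have -> : (fun x => complex.Im (f x + g x)) = (fun x => complex.Im (f x) + complex.Im (g x)).
    by apply: funext => y; case: (f y) => ? ?; case: (g y).
  exact: continuousD (jf x) (jg x).
Qed.

Lemma continuous_complexM f g : continuous f -> continuous g ->
  continuous (fun x => f x * g x).
Proof.
move=> cf cg; have [rf rg] := (continuous_Re cf, continuous_Re cg).
have [jf jg] := (continuous_Im cf, continuous_Im cg).
apply: continuous_complex => x.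
- have -> : (fun x => complex.Re (f x * g x)) = (fun x =>
      complex.Re (f x) * complex.Re (g x) - complex.Im (f x) * complex.Im (g x)).
    by apply: funext => y; case: (f y) => ? ?; case: (g y).
  exact: continuousB (continuousM (rf x) (rg x)) (continuousM (jf x) (jg x)).
- have -> : (fun x => complex.Im (f x * g x)) = (fun x =>
      complex.Re (f x) * complex.Im (g x) + complex.Im (f x) * complex.Re (g x)).
    by apply: funext => y; case: (f y) => ? ? ; case: (g y) => ? ? /=; rewrite addrC.
  exact: continuousD (continuousM (rf x) (jg x)) (continuousM (jf x) (rg x)).
Qed.

End ComplexContinuity.

Section ComplexMatrixContinuity.
Variables (R : realType) (X : topologicalType).
Local Notation C := (cpx R).

Lemma complex_add_continuous : continuous (fun z : C * C => z.1 + z.2).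
Proof. exact: continuous_complexD (@fst_continuous _ _) (@snd_continuous _ _). Qed.

Lemma continuous_mulmx m n p (A : X -> 'M[C]_(m, n)) (B : X -> 'M[C]_(n, p)) :
  continuous A -> continuous B -> continuous (fun x => A x *m B x).
Proof.
move=> cA cB; apply: continuous_mx => i j.
have -> : (fun x => (A x *m B x) i j) = (fun x => \sum_k A x i k * B x k j).
  by apply: funext => x; rewrite mxE.
apply: continuous_big => [|k _]; first exact: complex_add_continuous.
by apply: continuous_complexM;
  [exact: continuousT_comp cA (@mx_entry_continuous _ _ _ i k) |
   exact: continuousT_comp cB (@mx_entry_continuous _ _ _ k j)].
Qed.

Lemma continuous_mxtrace n (A : X -> 'M[C]_n) :
  continuous A -> continuous (fun x => \tr (A x)).
Proof.
move=> cA; apply: continuous_big => [|i _]; first exact: complex_add_continuous.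
exact: continuousT_comp cA (@mx_entry_continuous _ _ _ i i).
Qed.

End ComplexMatrixContinuity.

Section QuotientSpace.
Context {X : topologicalType} (r : X -> X -> Prop).

Lemma qpi_continuous : continuous (qpi r).
Proof. by apply/continuousP => A oA. Qed.

Lemma qspace_continuous (Y : topologicalType) (f : qspace r -> Y) :
  continuous (f \o qpi r) -> continuous f.
Proof. by move/continuousP => cf; apply/continuousP => A /cf. Qed.

Definition qrep (q : qspace r) : X := sval (cid (svalP q)).

Lemma qrepK q : qpi r (qrep q) = q.
Proof.
rewrite /qrep; case: (cid _) => x qx /=.
by apply: eq_sig_hprop => [A p p'|]; [exact: Prop_irrelevance | rewrite /= qx].
Qed.

Lemma qspace_compact : compact [set: X] -> compact [set: qspace r].
Proof.
move=> cX; have -> : [set: qspace r] = qpi r @` [set: X].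
  by apply/seteqP; split => q // _; exists (qrep q); rewrite ?qrepK.
by apply: continuous_compact => //; apply: continuous_subspaceT; exact: qpi_continuous.
Qed.

Hypothesis r_refl : forall x, r x x.

Lemma qpi_eq_rel x y : qpi r x = qpi r y -> r x y.
Proof.
move=> /(congr1 sval) /= xy; have : [set z | r y z] y by exact: r_refl.
by rewrite -xy.
Qed.

Definition qlift (Y : Type) (f : X -> Y) (q : qspace r) : Y := f (qrep q).

Section Lift.
Variables (Y : Type) (f : X -> Y).
Hypothesis f_rel : forall x y, r x y -> f x = f y.

Lemma qlift_qpi x : qlift f (qpi r x) = f x.
Proof. by apply: f_rel; apply: qpi_eq_rel; rewrite qrepK. Qed.

End Lift.

Lemma qlift_continuous (Y : topologicalType) (f : X -> Y) :
  (forall x y, r x y -> f x = f y) -> continuous f -> continuous (qlift f).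
Proof.
move=> f_rel cf; apply: qspace_continuous.
by have -> : qlift f \o qpi r = f by apply: funext => x /=; exact: qlift_qpi.
Qed.

Hypothesis r_sym : forall x y, r x y -> r y x.
Hypothesis r_trans : forall x y z, r x y -> r y z -> r x z.

Lemma qpi_eqP x y : qpi r x = qpi r y <-> r x y.
Proof.
split; first exact: qpi_eq_rel.
move=> xy; apply: eq_sig_hprop => [A p p'|]; first exact: Prop_irrelevance.
apply/seteqP; split => z /=; [exact: r_trans (r_sym xy) | exact: r_trans xy].
Qed.

End QuotientSpace.

Lemma set_val_continuous (X : topologicalType) (A : set X) :
  continuous (@set_val X A : set_type A -> X).
Proof. exact: initial_continuous. Qed.

Lemma continuous_set_type (X Y : topologicalType) (A : set Y) (f : X -> set_type A) :
  continuous (set_val \o f) -> continuous f.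
Proof. exact: (@continuous_comp_initial _ _ _ set_val f). Qed.

Lemma set_type_compact (X : topologicalType) (A : set X) :
  compact A -> compact [set: set_type A].
Proof.
move=> cA; have [->|/set0P [a Aa]] := eqVneq A set0.
  have -> : [set: set_type (set0 : set X)] = set0.
    by apply/seteqP; split => // x; have [] := set_valP x.
  exact: compact0.
pose lift x : set_type A :=
  if pselect (A x) is left Ax then exist _ x (mem_set Ax) else exist _ a (mem_set Aa).
have liftK (x : set_type A) : lift (set_val x) = x.
  case: x => x /[dup] /set_mem Ax xA; rewrite /lift /=; case: pselect => // Ax'.
  by apply: eq_sig_hprop => [y p p'|]; [exact: Prop_irrelevance|].
have -> : [set: set_type A] = lift @` A.
  by apply/seteqP; split => x // _; exists (set_val x); [exact/set_mem/(svalP x)|].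
apply: continuous_compact => //; apply/subspace_sigL_continuousP.
have -> : sigL A lift = id by apply: funext => x; exact: liftK.
by move=> x; exact: cvg_id.
Qed.

Lemma hausdorff_injective (X Y : topologicalType) (f : X -> Y) :
  continuous f -> injective f -> hausdorff_space Y -> hausdorff_space X.
Proof.
move=> cf fI hY p q pq; apply: fI; apply: hY => A B /cf pA /cf qB.
by have [x [Ax Bx]] := pq _ _ pA qB; exists (f x).
Qed.

Lemma homeomorphic_sym (X Y : topologicalType) : homeomorphic X Y -> homeomorphic Y X.
Proof. by case=> f [g [fK gK cf cg]]; exists g, f. Qed.

Lemma compact_hausdorff_homeomorphic (X Y : topologicalType) (f : X -> Y) :
  compact [set: X] -> hausdorff_space Y -> continuous f -> injective f ->
  (forall y, exists x, f x = y) -> homeomorphic X Y.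
Proof.
move=> cX hY cf fI fS; pose g y := sval (cid (fS y)).
have gK : cancel g f by move=> y; rewrite /g; case: cid.
have fK : cancel f g by move=> x; apply: fI; rewrite gK.
exists f, g; split => //; apply/continuous_closedP => A cA.
have -> : g @^-1` A = f @` A.
  apply/seteqP; split => y; first by move=> Agy; exists (g y); rewrite ?gK.
  by case=> x Ax <-; rewrite /preimage /= fK.
apply: compact_closed hY _; apply: continuous_compact.
  exact: continuous_subspaceT.
exact: subclosed_compact cA cX _.
Qed.

Section Quaternions.
Variable R : realType.
Local Notation M2 := 'M[cpx R]_2.
Local Open Scope complex_scope.

(* The quaternion a + b i + c j + d k as a complex 2 x 2 matrix. *)
Definition quat (a b c d : R) : M2 :=
  \matrix_(i < 2, j < 2)
    if i == 0 then (if j == 0 then a +i* b else c +i* d)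
    else (if j == 0 then (- c) +i* d else a +i* (- b)).

Definition qnorm2 (a b c d : R) := a ^+ 2 + b ^+ 2 + c ^+ 2 + d ^+ 2.

Lemma quat_inj a b c d a' b' c' d' : quat a b c d = quat a' b' c' d' ->
  [/\ a = a', b = b', c = c' & d = d'].
Proof. by move/matrixP => e; move: (e 0 0) (e 0 1); rewrite !mxE => -[-> ->] [-> ->]. Qed.

Lemma quatD a b c d a' b' c' d' :
  quat a b c d + quat a' b' c' d' = quat (a + a') (b + b') (c + c') (d + d').
Proof. by apply: mx2_eq; rewrite !mxE /=; simpc; congr (_ +i* _); ring. Qed.

Lemma quatN a b c d : - quat a b c d = quat (- a) (- b) (- c) (- d).
Proof. by apply: mx2_eq; rewrite !mxE /=; simpc. Qed.

Lemma quatM a b c d a' b' c' d' :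
  quat a b c d * quat a' b' c' d' =
  quat (a * a' - b * b' - c * c' - d * d') (a * b' + b * a' + c * d' - d * c')
       (a * c' - b * d' + c * a' + d * b') (a * d' + b * c' - c * b' + d * a').
Proof.
by apply: mx2_eq; rewrite -mulmxE !mxE big_ord2 !mxE /=; simpc; congr (_ +i* _); ring.
Qed.

Lemma quatZ t a b c d : t%:C *: quat a b c d = quat (t * a) (t * b) (t * c) (t * d).
Proof. by apply: mx2_eq; rewrite !mxE /=; simpc; congr (_ +i* _); ring. Qed.

Lemma quat1 : quat 1 0 0 0 = 1.
Proof. by apply: mx2_eq; rewrite !mxE /= ?oppr0. Qed.

Lemma quat0 : quat 0 0 0 0 = 0.
Proof. by apply: mx2_eq; rewrite !mxE /= ?oppr0. Qed.

Lemma det_quat a b c d : \det (quat a b c d) = (qnorm2 a b c d)%:C.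
Proof. by rewrite det_mx2 !mxE /=; simpc; congr (_ +i* _); rewrite /qnorm2; ring. Qed.

Lemma conjT_quat a b c d : conjT (quat a b c d) = quat a (- b) (- c) (- d).
Proof. by apply: mx2_eq; rewrite !mxE /= ?opprK. Qed.

Lemma mxtrace_quat a b c d : \tr (quat a b c d) = (a *+ 2)%:C.
Proof. by rewrite /mxtrace big_ord2 !mxE /=; simpc; congr (_ +i* _); ring. Qed.

Lemma quat_mul_conj a b c d :
  quat a b c d * quat a (- b) (- c) (- d) = quat (qnorm2 a b c d) 0 0 0.
Proof. by rewrite quatM /qnorm2; congr quat; ring. Qed.

Lemma quat_conj_mul a b c d :
  quat a (- b) (- c) (- d) * quat a b c d = quat (qnorm2 a b c d) 0 0 0.
Proof. by rewrite quatM /qnorm2; congr quat; ring. Qed.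

Lemma SU2_quat a b c d : qnorm2 a b c d = 1 -> SU2_set (quat a b c d).
Proof.
by move=> n1; split; [rewrite conjT_quat mulmxE quat_mul_conj n1 quat1 | rewrite det_quat n1].
Qed.

Lemma quat_unit a b c d : qnorm2 a b c d = 1 -> quat a b c d \is a GRing.unit.
Proof.
by move=> n1; apply/unitrP; exists (quat a (- b) (- c) (- d));
  rewrite quat_mul_conj quat_conj_mul n1 quat1.
Qed.

Lemma quatV a b c d : qnorm2 a b c d = 1 -> (quat a b c d)^-1 = quat a (- b) (- c) (- d).
Proof.
move=> n1; apply: (mulrI (quat_unit n1)).
by rewrite mulrV ?quat_unit // quat_mul_conj n1 quat1.
Qed.

Lemma SU2_quatP (A : M2) :
  SU2_set A -> exists a b c d, qnorm2 a b c d = 1 /\ A = quat a b c d.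
Proof.
case=> /matrixP AA1 detA1; have := AA1 0 0; have := AA1 1 0.
rewrite det_mx2 in detA1; rewrite !mxE !big_ord2 !mxE /= => e10 e00.
have [e11 e10'] := second_row_eq e00 e10 detA1.
move: e00 e11 e10'; case Ea: (A 0 0) => [a b]; case Ec: (A 0 1) => [c d] {e10} e00 e11 e10.
exists a, b, c, d; split.
  by move: e00 => /(congr1 (@complex.Re R)) /=; rewrite /qnorm2 => <-; ring.
by apply: mx2_eq; rewrite !mxE /= ?Ea ?Ec ?e11 ?e10 //; simpc.
Qed.

Lemma SU2_unit (A : M2) : SU2_set A -> A \is a GRing.unit.
Proof. by case/SU2_quatP => a [b] [c] [d] [n1 ->]; exact: quat_unit. Qed.

Lemma SU21 : SU2_set (1 : M2).
Proof. by rewrite -quat1; apply: SU2_quat; rewrite /qnorm2; ring. Qed.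

Lemma SU2M (A B : M2) : SU2_set A -> SU2_set B -> SU2_set (A * B).
Proof.
case/SU2_quatP => a [b] [c] [d] [nA ->]; case/SU2_quatP => a' [b'] [c'] [d'] [nB ->].
rewrite quatM; apply: SU2_quat.
by rewrite -[1]mulr1 -{1}nA -nB /qnorm2; ring.
Qed.

Lemma SU2V (A : M2) : SU2_set A -> SU2_set A^-1.
Proof.
case/SU2_quatP => a [b] [c] [d] [n1 ->]; rewrite quatV //.
by apply: SU2_quat; rewrite -n1 /qnorm2; ring.
Qed.

End Quaternions.

Section Conjugation.
Variable T : unitRingType.
Implicit Types u v x y : T.

Definition conjm u x := u * x * u^-1.

Lemma conjmN u x : conjm u (- x) = - conjm u x.
Proof. by rewrite /conjm mulrN mulNr. Qed.

Lemma conj1m x : conjm 1 x = x.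
Proof. by rewrite /conjm invr1 mul1r mulr1. Qed.

Lemma conjNm u x : conjm (- u) x = conjm u x.
Proof. by rewrite /conjm invrN mulrN !mulNr opprK. Qed.

Variable u : T.
Hypothesis uu : u \is a GRing.unit.

Lemma conjmM x y : conjm u x * conjm u y = conjm u (x * y).
Proof. by rewrite /conjm !mulrA mulrVK. Qed.

Lemma conjm1 : conjm u 1 = 1.
Proof. by rewrite /conjm mulr1 mulrV. Qed.

Lemma conjm_comp v : v \is a GRing.unit -> forall x, conjm (u * v) x = conjm u (conjm v x).
Proof. by move=> uv x; rewrite /conjm invrM // !mulrA. Qed.

Lemma conjmK x : conjm u^-1 (conjm u x) = x.
Proof. by rewrite /conjm invrK !mulrA mulVr // mul1r mulrVK. Qed.

Lemma conjmV x : x \is a GRing.unit -> (conjm u x)^-1 = conjm u x^-1.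
Proof. by move=> ux; rewrite /conjm !invrM ?unitrV ?unitrMr ?invrK ?mulrA. Qed.

Lemma conjm_conjm v : v \is a GRing.unit ->
  forall x, conjm u (conjm v x) = conjm (conjm u v) (conjm u x).
Proof.
by move=> uv x; rewrite /conjm !invrM ?unitrMr ?unitrV // invrK !mulrA !mulrVK.
Qed.

Lemma conjm_commutator x y : x \is a GRing.unit -> y \is a GRing.unit ->
  conjm u x * conjm u y * (conjm u x)^-1 * (conjm u y)^-1 = conjm u (x * y * x^-1 * y^-1).
Proof. by move=> ux uy; rewrite (conjmV ux) (conjmV uy) !conjmM. Qed.

Lemma conjm_eq x y : u * x = y * u -> conjm u x = y.
Proof. by move=> xy; rewrite /conjm xy mulrK. Qed.

End Conjugation.

Section SU2Conjugation.
Variable R : realType.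
Local Notation M2 := 'M[cpx R]_2.
Local Notation quat := (@quat R).
Local Notation qnorm2 := (@qnorm2 R).
Local Open Scope complex_scope.

Lemma commut_conjm (u a b : M2) : u \is a GRing.unit -> a \is a GRing.unit ->
  b \is a GRing.unit -> commut (conjm u a) (conjm u b) = conjm u (commut a b).
Proof. by move=> uu ua ub; exact: conjm_commutator. Qed.

Lemma mxtrace_conjm (u : M2) : u \is a GRing.unit -> forall x, \tr (conjm u x) = \tr x.
Proof. by move=> uu x; rewrite /conjm -!mulmxE mxtrace_mulC !mulmxE mulrA mulVr ?mul1r. Qed.

Lemma SU2_conjm (u x : M2) : SU2_set u -> SU2_set x -> SU2_set (conjm u x).
Proof. by move=> su sx; apply: SU2M; [apply: SU2M | apply: SU2V]. Qed.

Lemma commut_eqN1 (g h : M2) : g \is a GRing.unit -> h \is a GRing.unit ->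
  commut g h = -1 <-> g * h = - (h * g).
Proof.
move=> ug uh; split => [ghN1|gh].
  have -> : g * h = commut g h * h * g by rewrite /commut !divrK.
  by rewrite ghN1 mulN1r mulNr.
by rewrite /commut gh !mulNr mulrK // mulrV.
Qed.

Lemma pure_quat_sqr v1 v2 v3 : qnorm2 0 v1 v2 v3 = 1 ->
  quat 0 v1 v2 v3 * quat 0 v1 v2 v3 = -1.
Proof. by move=> n1; rewrite quatM -quat1 quatN -n1 /qnorm2; congr quat; ring. Qed.

Lemma SU2_sqrN1P (A : M2) : SU2_set A -> A * A = -1 ->
  exists v1 v2 v3, qnorm2 0 v1 v2 v3 = 1 /\ A = quat 0 v1 v2 v3.
Proof.
case/SU2_quatP => a [b] [c] [d] [n1 ->]; rewrite quatM -quat1 quatN.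
case/quat_inj => re _ _ _; suff a0 : a = 0 by exists b, c, d; rewrite -a0.
apply/eqP; rewrite -sqrf_eq0; apply/eqP; move: n1; rewrite /qnorm2 => n1; lra.
Qed.

(* With g = a + u and h = b + w, anticommutation reads a b = u.w and
   a w + b u = 0, whence b = b |g|^2 = a (a b - u.w) + u.(a w + b u) = 0, and
   symmetrically a = 0. *)
Lemma anticomm_SU2_sqr (g h : M2) : SU2_set g -> SU2_set h -> g * h = - (h * g) ->
  g * g = -1 /\ h * h = -1.
Proof.
case/SU2_quatP => a [u1] [u2] [u3] [ng ->]; case/SU2_quatP => b [w1] [w2] [w3] [nh ->].
move=> gh; rewrite !quatM quatN in gh; case/quat_inj: gh => e0 e1 e2 e3.
have E0 : a * b - (u1 * w1 + u2 * w2 + u3 * w3) = 0 by lra.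
have E1 : a * w1 + b * u1 = 0 by lra.
have E2 : a * w2 + b * u2 = 0 by lra.
have E3 : a * w3 + b * u3 = 0 by lra.
have b0 : b = 0.
  transitivity (b * qnorm2 a u1 u2 u3); first by rewrite ng mulr1.
  transitivity (a * (a * b - (u1 * w1 + u2 * w2 + u3 * w3)) + u1 * (a * w1 + b * u1)
    + u2 * (a * w2 + b * u2) + u3 * (a * w3 + b * u3)); first by rewrite /qnorm2; ring.
  by rewrite E0 E1 E2 E3; ring.
have a0 : a = 0.
  transitivity (a * qnorm2 b w1 w2 w3); first by rewrite nh mulr1.
  transitivity (b * (a * b - (u1 * w1 + u2 * w2 + u3 * w3)) + w1 * (a * w1 + b * u1)
    + w2 * (a * w2 + b * u2) + w3 * (a * w3 + b * u3)); first by rewrite /qnorm2; ring.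
  by rewrite E0 E1 E2 E3; ring.
by subst a b; split; apply: pure_quat_sqr.
Qed.

Definition qi := quat 0 1 0 0.
Definition qj := quat 0 0 1 0.

Lemma SU2_qi : SU2_set qi. Proof. by apply: SU2_quat; rewrite /qnorm2; ring. Qed.
Lemma SU2_qj : SU2_set qj. Proof. by apply: SU2_quat; rewrite /qnorm2; ring. Qed.

Lemma qi_sqr : qi * qi = -1. Proof. by apply: pure_quat_sqr; rewrite /qnorm2; ring. Qed.
Lemma qj_sqr : qj * qj = -1. Proof. by apply: pure_quat_sqr; rewrite /qnorm2; ring. Qed.

Lemma qi_qj_anticomm : qi * qj = - (qj * qi).
Proof. by rewrite !quatM quatN; congr quat; ring. Qed.

Lemma commut_qi_qj : commut qi qj = -1.
Proof.
by apply/(commut_eqN1 (SU2_unit SU2_qi) (SU2_unit SU2_qj)); exact: qi_qj_anticomm.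
Qed.

Lemma commut_qj_qi : commut qj qi = -1.
Proof.
by apply/(commut_eqN1 (SU2_unit SU2_qj) (SU2_unit SU2_qi)); rewrite qi_qj_anticomm opprK.
Qed.

Lemma quat_scale_SU2 a b c d : quat a b c d != 0 ->
  exists t : R, SU2_set (t%:C *: quat a b c d).
Proof.
move=> q0; have n_gt0 : 0 < qnorm2 a b c d.
  rewrite lt_def /qnorm2 !addr_ge0 ?sqr_ge0 // andbT; apply: contraNN q0.
  rewrite !paddr_eq0 ?addr_ge0 ?sqr_ge0 // !sqrf_eq0.
  by case/andP => /andP [/andP [/eqP -> /eqP ->] /eqP ->] /eqP ->; rewrite quat0.
set s := Num.sqrt (qnorm2 a b c d).
have s_gt0 : 0 < s by rewrite sqrtr_gt0.
have s2 : s ^+ 2 = qnorm2 a b c d by rewrite sqr_sqrtr // ltW.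
exists s^-1; rewrite quatZ; apply: SU2_quat.
transitivity (s^-1 ^+ 2 * qnorm2 a b c d); first by rewrite /qnorm2; ring.
by rewrite -s2 -exprMn mulVf ?expr1n // gt_eqF.
Qed.

(* If a^2 = b^2 = -1 then q = 1 - b a satisfies q a = b q; it is nonzero unless
   a = -b, and rescaling it lands in SU(2). *)
Lemma SU2_sqrN1_conj (a b : M2) : SU2_set a -> SU2_set b ->
  a * a = -1 -> b * b = -1 -> a != - b ->
  exists2 m, SU2_set m & m * a = b * m /\
    forall e, e * a = - (a * e) -> e * b = - (b * e) -> m * e = e * m.
Proof.
move=> sa sb aa bb nab; set q := 1 - b * a.
have qa : q * a = b * q.
  by rewrite /q mulrBl mulrBr mul1r mulr1 -mulrA aa mulrA bb mulrN1 mulN1r !opprK addrC.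
have qe e : e * a = - (a * e) -> e * b = - (b * e) -> q * e = e * q.
  move=> ea eb; rewrite /q mulrBl mulrBr mul1r mulr1 -mulrA.
  by rewrite -[a * e]opprK -ea mulrN mulrA -[b * e]opprK -eb mulNr opprK mulrA.
have [a' [a1] [a2] [a3] [_ Ea]] := SU2_quatP sa.
have [b' [b1] [b2] [b3] [_ Eb]] := SU2_quatP sb.
have [c [c1 [c2 [c3 Eq]]]] : exists c c1 c2 c3, q = quat c c1 c2 c3.
  by rewrite /q Ea Eb quatM -quat1 quatN quatD; do 4 eexists.
have q0 : q != 0.
  apply: contraNneq nab => /eqP; rewrite subr_eq0 => /eqP ba.
  by rewrite -[a]mul1r ba -mulrA aa mulrN1.
have [t st] : exists t : R, SU2_set (t%:C *: q).
  by rewrite Eq; apply: quat_scale_SU2; rewrite -Eq.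
exists (t%:C *: q); first exact: st.
by split => [|e ea eb]; rewrite -scalerAl ?qa ?(qe e ea eb) scalerAr.
Qed.

Lemma SU2_sqrN1_conj_qi (g : M2) : SU2_set g -> g * g = -1 ->
  exists2 m, SU2_set m & conjm m g = qi.
Proof.
move=> sg gg; have [->|ng] := eqVneq g (- qi).
  exists qj; first exact: SU2_qj.
  by apply: (conjm_eq (SU2_unit SU2_qj)); rewrite mulrN qi_qj_anticomm.
have [m sm [mg _]] := SU2_sqrN1_conj sg SU2_qi gg qi_sqr ng.
by exists m; [exact: sm | apply: (conjm_eq (SU2_unit sm))].
Qed.

Lemma SU2_sqrN1_conj_qj (h : M2) : SU2_set h -> h * h = -1 -> qi * h = - (h * qi) ->
  exists2 m, SU2_set m & conjm m h = qj /\ conjm m qi = qi.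
Proof.
move=> sh hh hi; have ui := SU2_unit SU2_qi.
have [->|nh] := eqVneq h (- qj).
  exists qi; first exact: SU2_qi.
  by split; apply: (conjm_eq ui); rewrite ?mulrN ?qi_qj_anticomm ?opprK.
have [m sm [mh mi]] := SU2_sqrN1_conj sh SU2_qj hh qj_sqr nh.
exists m; first exact: sm.
split; apply: (conjm_eq (SU2_unit sm)); first exact: mh.
by apply: mi; rewrite ?qi_qj_anticomm ?opprK.
Qed.

Lemma anticomm_SU2_conj (g h : M2) : SU2_set g -> SU2_set h -> g * h = - (h * g) ->
  exists2 m, SU2_set m & conjm m g = qi /\ conjm m h = qj.
Proof.
move=> sg sh gh; have [gg hh] := anticomm_SU2_sqr sg sh gh.
have [m1 sm1 m1g] := SU2_sqrN1_conj_qi sg gg.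
have um1 := SU2_unit sm1.
have sh1 : SU2_set (conjm m1 h) by exact: SU2_conjm.
have hh1 : conjm m1 h * conjm m1 h = -1 by rewrite (conjmM um1) hh conjmN (conjm1 um1).
have hi1 : qi * conjm m1 h = - (conjm m1 h * qi) by rewrite -m1g !(conjmM um1) gh conjmN.
have [m2 sm2 [m2h m2i]] := SU2_sqrN1_conj_qj sh1 hh1 hi1.
exists (m2 * m1); first exact: SU2M.
by rewrite !(conjm_comp (SU2_unit sm2) um1) m1g m2i.
Qed.

End SU2Conjugation.

Section Sphere.
Variable R : realType.
Local Notation M2 := 'M[cpx R]_2.
Local Notation quat := (@quat R).
Local Notation qnorm2 := (@qnorm2 R).
Local Notation qi := (@qi R).
Local Notation qj := (@qj R).

Lemma S2_setE (v : 'rV[R]_3) : S2_set v <-> qnorm2 0 (v 0 0) (v 0 1) (v 0 2) = 1.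
Proof.
rewrite /S2_set /qnorm2 /= !big_ord_recl big_ord0 expr0n add0r addr0 !addrA.
have -> : lift ord0 ord0 = 1 :> 'I_3 by apply: val_inj.
by have -> : lift ord0 (lift ord0 ord0) = 2 :> 'I_3 by apply: val_inj.
Qed.

Definition pquat (v : 'rV[R]_3) : M2 := quat 0 (v 0 0) (v 0 1) (v 0 2).

Lemma SU2_pquat v : S2_set v -> SU2_set (pquat v).
Proof. by move/S2_setE; exact: SU2_quat. Qed.

Lemma pquat_sqr v : S2_set v -> pquat v * pquat v = -1.
Proof. by move/S2_setE; exact: pure_quat_sqr. Qed.

Lemma pquatN v : pquat (- v) = - pquat v.
Proof. by rewrite /pquat quatN !mxE oppr0. Qed.

Lemma pquatV v : S2_set v -> (pquat v)^-1 = pquat (- v).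
Proof. by move/S2_setE => n1; rewrite /pquat quatV // !mxE. Qed.

Definition frame (p q : M2) (a : 'I_3) : M2 := nth 0 [:: p; q; p * q] a.

Definition trace_gram (p q p' q' : M2) : 'M[R]_3 :=
  \matrix_(a, b) complex.Re (\tr (frame p q a * frame p' q' b)).

Lemma frame_conjm (u : M2) : u \is a GRing.unit ->
  forall p q a, frame (conjm u p) (conjm u q) a = conjm u (frame p q a).
Proof. by move=> uu p q; case=> [[|[|[|//]]] ?]; rewrite /frame /= ?(conjmM uu). Qed.

Lemma trace_gram_conjm (u : M2) : u \is a GRing.unit -> forall p q p' q',
  trace_gram (conjm u p) (conjm u q) (conjm u p') (conjm u q') = trace_gram p q p' q'.
Proof.
move=> uu p q p' q'; apply/matrixP => a b.
by rewrite !mxE !(frame_conjm uu) (conjmM uu) (mxtrace_conjm uu).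
Qed.

(* Conjugation by a pure unit quaternion v is the half-turn about v, so its
   matrix in the basis (i, j, k) is 2 v^T v - 1; the trace pairing is -2 times
   the dot product. *)
Lemma trace_gram_pquat v : S2_set v ->
  trace_gram (conjm (pquat v) qi) (conjm (pquat v) qj) qi qj = 2%:M - 4 *: (v^T *m v).
Proof.
move=> /[dup] /S2_setE n1 /SU2_pquat /SU2_unit uv.
apply/matrixP => a b; rewrite !mxE !(frame_conjm uv) big_ord1 !mxE /conjm /pquat.
move: n1 (quatV n1); rewrite /qnorm2 expr0n add0r => n1 ->.
case: (ord3P a) => ->; case: (ord3P b) => ->;
  rewrite /frame /qi /qj /= !quatM mxtrace_quat /=; lra.
Qed.

End Sphere.

Section Special.
Variable R : realType.
Local Notation M2 := 'M[cpx R]_2.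
Local Notation qi := (@qi R).
Local Notation qj := (@qj R).
Local Notation Hom := (Defs.Hom R).
Local Notation conj_rel := (@conj_rel R).
Implicit Types v w : S2 R.

Definition su2 (A : M2) (hA : SU2_set A) : SU2 R := exist _ A (mem_set hA).

Lemma conj_rel_conjm (x y : Hom) (m : M2) : SU2_set m ->
  g1 (set_val y) = conjm m (g1 (set_val x)) -> h1 (set_val y) = conjm m (h1 (set_val x)) ->
  g2 (set_val y) = conjm m (g2 (set_val x)) -> h2 (set_val y) = conjm m (h2 (set_val x)) ->
  conj_rel x y.
Proof.
by move=> sm e1 e2 e3 e4; exists (su2 sm); split; [exact: e1 | exact: e2 | exact: e3 | exact: e4].
Qed.

Lemma conj_rel_refl (x : Hom) : conj_rel x x.
Proof. by apply: (conj_rel_conjm (SU21 R)); exact/esym/conj1m. Qed.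

Lemma conj_rel_sym (x y : Hom) : conj_rel x y -> conj_rel y x.
Proof.
case=> k [e1 e2 e3 e4]; have uk := SU2_unit (set_valP k).
apply: (conj_rel_conjm (SU2V (set_valP k)));
  [rewrite e1 | rewrite e2 | rewrite e3 | rewrite e4]; exact/esym/(conjmK uk).
Qed.

Lemma conj_rel_trans (x y z : Hom) : conj_rel x y -> conj_rel y z -> conj_rel x z.
Proof.
case=> k [e1 e2 e3 e4]; case=> k' [f1 f2 f3 f4].
have [uk uk'] := (SU2_unit (set_valP k), SU2_unit (set_valP k')).
apply: (conj_rel_conjm (SU2M (set_valP k') (set_valP k)));
  [rewrite f1 e1 | rewrite f2 e2 | rewrite f3 e3 | rewrite f4 e4];
  exact/esym/(conjm_comp uk' uk).
Qed.

Lemma antipodal_rel_refl (v : S2 R) : antipodal_rel v v.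
Proof. by left. Qed.

Lemma antipodal_rel_sym (v w : S2 R) : antipodal_rel v w -> antipodal_rel w v.
Proof. by rewrite /antipodal_rel; case=> ->; [left | right; rewrite opprK]. Qed.

Lemma antipodal_rel_trans (u v w : S2 R) :
  antipodal_rel u v -> antipodal_rel v w -> antipodal_rel u w.
Proof.
by rewrite /antipodal_rel; case=> e1 [] ->; rewrite e1 ?opprK; [left | right | right | left].
Qed.

Definition sphere_K4 (v : S2 R) : K4 R :=
  let k := SU2_pquat (set_valP v) in
  (su2 (SU2_qi R), su2 (SU2_qj R),
   su2 (SU2_conjm k (SU2_qj R)), su2 (SU2_conjm k (SU2_qi R))).

Lemma sphere_K4_Hom v : Hom_set (sphere_K4 v).
Proof.
have [ui uj] := (SU2_unit (SU2_qi R), SU2_unit (SU2_qj R)).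
have uk := SU2_unit (SU2_pquat (set_valP v)).
rewrite /Hom_set /= (commut_conjm uk uj ui) commut_qi_qj commut_qj_qi.
by rewrite conjmN (conjm1 uk) mulrNN mulr1.
Qed.

Lemma sphere_K4_special v : special_set (sphere_K4 v).
Proof.
exists (su2 (SU2_pquat (set_valP v))).
by split; [exact: commut_qi_qj | exact: pquat_sqr (set_valP v) | |].
Qed.

Definition sphere_Hom v : Hom := exist _ (sphere_K4 v) (mem_set (sphere_K4_Hom v)).

Lemma sphere_HomE v : let k := pquat (set_val v) in
  [/\ g1 (set_val (sphere_Hom v)) = qi, h1 (set_val (sphere_Hom v)) = qj,
      g2 (set_val (sphere_Hom v)) = conjm k qj & h2 (set_val (sphere_Hom v)) = conjm k qi].
Proof. by []. Qed.

Definition sphere_class v : SpecialSubspace R :=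
  exist _ (qpi conj_rel (sphere_Hom v))
    (mem_set (ex_intro _ (sphere_Hom v) (conj (sphere_K4_special v) erefl))).

Lemma sphere_class_antipodal v w : antipodal_rel v w -> sphere_class v = sphere_class w.
Proof.
move=> vw; have ek x : conjm (pquat (sval w)) x = conjm (pquat (sval v)) x.
  by move: vw; rewrite /antipodal_rel !set_valE => -[] ->; rewrite ?pquatN ?conjNm.
apply: val_inj; congr qpi; apply: val_inj => /=.
by congr (_, _, _, _); apply: val_inj; rewrite /= ek.
Qed.

Lemma sphere_class_surj (q : SpecialSubspace R) : exists v, sphere_class v = q.
Proof.
have [x [[k [ghN1 kk e3 e4]] qE]] := set_valP q.
have e3' : g2 (set_val x) = conjm (set_val k) (h1 (set_val x)) := e3.
have e4' : h2 (set_val x) = conjm (set_val k) (g1 (set_val x)) := e4.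
have sg : SU2_set (g1 (set_val x)) := set_valP _.
have sh : SU2_set (h1 (set_val x)) := set_valP _.
have sk : SU2_set (set_val k) := set_valP k.
have [[ug uh] uk] := (SU2_unit sg, SU2_unit sh, SU2_unit sk).
have [m sm [mg mh]] := anticomm_SU2_conj sg sh ((commut_eqN1 ug uh).1 ghN1).
have um := SU2_unit sm.
have mkk : conjm m (set_val k) * conjm m (set_val k) = -1.
  by rewrite (conjmM um) kk conjmN (conjm1 um).
have [v1 [v2 [v3 [n1 Ek]]]] := SU2_sqrN1P (SU2_conjm sm sk) mkk.
pose u : 'rV[R]_3 := \row_(i < 3) [:: v1; v2; v3]`_i.
have Su : S2_set u by apply/S2_setE; rewrite !mxE.
have Eu : pquat u = conjm m (set_val k) by rewrite Ek /pquat !mxE.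
have Ek' y : conjm m (conjm (set_val k) y) = conjm (pquat u) (conjm m y).
  by rewrite Eu; exact: conjm_conjm.
exists (exist _ u (mem_set Su)); apply: val_inj; rewrite /= qE; symmetry.
apply/(qpi_eqP conj_rel_refl conj_rel_sym conj_rel_trans).
have [E1 E2 E3 E4] := sphere_HomE (exist _ u (mem_set Su)).
apply: (conj_rel_conjm sm); rewrite ?E1 ?E2 ?E3 ?E4.
- exact/esym/mg.
- exact/esym/mh.
- by rewrite e3' Ek' mh.
- by rewrite e4' Ek' mg.
Qed.

End Special.

Section Topology.
Variable R : realType.
Local Notation M2 := 'M[cpx R]_2.
Local Notation Hom := (Defs.Hom R).
Local Notation conj_rel := (@conj_rel R).
Local Notation antipodal_rel := (@antipodal_rel R).
Implicit Types v w : S2 R.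

Lemma continuous_quat (X : topologicalType) (a b c d : X -> R) :
  continuous a -> continuous b -> continuous c -> continuous d ->
  continuous (fun x => quat (a x) (b x) (c x) (d x)).
Proof.
move=> ca cb cc cd; apply: continuous_mx => i j.
have -> : (fun x => quat (a x) (b x) (c x) (d x) i j) = fun x =>
    if i == 0 then (if j == 0 then (a x +i* b x)%C else (c x +i* d x)%C)
    else (if j == 0 then ((- c x) +i* d x)%C else (a x +i* (- b x))%C).
  by apply: funext => x; rewrite mxE.
have cN (f : X -> R) : continuous f -> continuous (fun x => - f x).
  by move=> cf x; exact: continuousN (cf x).
by case: (i == 0); case: (j == 0); apply: continuous_complex; rewrite //=; exact: cN.
Qed.

Lemma continuous_trace_gram (X : topologicalType) (p q p' q' : X -> M2) :
  continuous p -> continuous q -> continuous p' -> continuous q' ->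
  continuous (fun x => trace_gram (p x) (q x) (p' x) (q' x)).
Proof.
have cframe (f g : X -> M2) a : continuous f -> continuous g ->
    continuous (fun x => frame (f x) (g x) a).
  by move=> cf cg; case: (ord3P a) => ->; [exact: cf | exact: cg | exact: continuous_mulmx].
move=> cp cq cp' cq'; apply: continuous_mx => a b.
have -> : (fun x => trace_gram (p x) (q x) (p' x) (q' x) a b) =
    fun x => complex.Re (\tr (frame (p x) (q x) a *m frame (p' x) (q' x) b)).
  by apply: funext => x; rewrite mxE mulmxE.
by apply/continuous_Re/continuous_mxtrace/continuous_mulmx; exact: cframe.
Qed.

Definition hom_gram (x : Hom) : 'M[R]_3 :=
  trace_gram (h2 (set_val x)) (g2 (set_val x)) (g1 (set_val x)) (h1 (set_val x)).

Lemma hom_gram_conj_rel (x y : Hom) : conj_rel x y -> hom_gram x = hom_gram y.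
Proof.
case=> k [e1 e2 e3 e4]; rewrite /hom_gram e1 e2 e3 e4.
exact/esym/(trace_gram_conjm (SU2_unit (set_valP k))).
Qed.

Lemma hom_gram_sphere v : hom_gram (sphere_Hom v) = 2%:M - 4 *: ((set_val v)^T *m set_val v).
Proof. exact: trace_gram_pquat (set_valP v). Qed.

Lemma hom_gram_continuous : continuous hom_gram.
Proof.
have cK := @set_val_continuous _ (@Hom_set R).
have cS := @set_val_continuous _ (@SU2_set R).
have c1 := continuousT_comp cK (@fst_continuous _ _).
have c11 := continuousT_comp c1 (@fst_continuous _ _).
have cg1 := continuousT_comp c11 (@fst_continuous _ _).
have ch1 := continuousT_comp c11 (@snd_continuous _ _).
have cg2 := continuousT_comp c1 (@snd_continuous _ _).
have ch2 := continuousT_comp cK (@snd_continuous _ _).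
by apply: continuous_trace_gram; apply: continuousT_comp cS.
Qed.

Lemma S2_compact : compact (@S2_set R).
Proof.
have cS : closed (@S2_set R).
  have cn : continuous (fun v : 'rV[R]_3 => \sum_(i < 3) v 0 i ^+ 2).
    apply: continuous_big => [|i _]; first exact: add_continuous.
    have -> : (fun v : 'rV[R]_3 => v 0 i ^+ 2) = fun v : 'rV[R]_3 => v 0 i * v 0 i.
      by apply: funext => v; rewrite expr2.
    have ci := @mx_entry_continuous R 1 3 0 i.
    by move=> v; exact: continuousM (ci v) (ci v).
  have -> : @S2_set R = (fun v : 'rV[R]_3 => \sum_(i < 3) v 0 i ^+ 2) @^-1` [set x | x = 1].
    by [].
  exact: (continuous_closedP _).1 cn _ (@closed_eq R 1).
apply: subclosed_compact cS (rV_compact (fun=> @segment_compact R (-1) 1)) _.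
move=> v /S2_setE; rewrite /qnorm2 expr0n add0r => n1 i; rewrite /= in_itv /= -ler_norml.
rewrite -(expr_le1 (n := 2)) // real_normK ?num_real //.
have := sqr_ge0 (v 0 0); have := sqr_ge0 (v 0 1); have := sqr_ge0 (v 0 2).
by case: (ord3P i) => ->; lra.
Qed.

Lemma continuous_pquat : continuous (@pquat R).
Proof. by apply: continuous_quat; [exact: cst_continuous | exact: mx_entry_continuous ..]. Qed.

Lemma sphere_class_continuous : continuous (@sphere_class R).
Proof.
have cv := @set_val_continuous _ (@S2_set R).
have cP : continuous (fun v : S2 R => pquat (set_val v)) := continuousT_comp cv continuous_pquat.
have cPN : continuous (fun v : S2 R => pquat (- set_val v)).
  have cN : continuous (fun v : S2 R => - set_val v) by move=> v; exact: continuousN (cv v).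
  exact: continuousT_comp cN continuous_pquat.
have crot x : continuous (fun v : S2 R => conjm (pquat (set_val v)) x).
  have -> : (fun v : S2 R => conjm (pquat (set_val v)) x) =
      fun v => pquat (set_val v) *m x *m pquat (- set_val v).
    by apply: funext => v; rewrite /conjm mulmxE pquatV //; exact: set_valP.
  by apply: continuous_mulmx => //; apply: continuous_mulmx => //; exact: cst_continuous.
have cH : continuous (@sphere_Hom R).
  have c3 : continuous (fun v => su2 (SU2_conjm (SU2_pquat (set_valP v)) (SU2_qj R))).
    by apply: continuous_set_type; exact: crot.
  have c4 : continuous (fun v => su2 (SU2_conjm (SU2_pquat (set_valP v)) (SU2_qi R))).
    by apply: continuous_set_type; exact: crot.
  apply: continuous_set_type; change (continuous (fun v : S2 R =>
    (su2 (SU2_qi R), su2 (SU2_qj R), su2 (SU2_conjm (SU2_pquat (set_valP v)) (SU2_qj R)),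
     su2 (SU2_conjm (SU2_pquat (set_valP v)) (SU2_qi R))))).
  by do 3![apply: pair_continuous => //]; exact: cst_continuous.
apply: continuous_set_type; change (continuous (qpi conj_rel \o @sphere_Hom R)).
exact: continuousT_comp cH (@qpi_continuous _ conj_rel).
Qed.

Definition special_gram (q : SpecialSubspace R) : 'M[R]_3 :=
  qlift hom_gram (set_val q).

Lemma special_gram_sphere v :
  special_gram (sphere_class v) = 2%:M - 4 *: ((set_val v)^T *m set_val v).
Proof.
rewrite /special_gram /= (qlift_qpi (@conj_rel_refl R) hom_gram_conj_rel).
exact: hom_gram_sphere.
Qed.

Lemma special_gram_continuous : continuous special_gram.
Proof.
exact: continuousT_comp (@set_val_continuous _ _)
  (qlift_continuous (@conj_rel_refl R) hom_gram_conj_rel hom_gram_continuous).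
Qed.

Lemma special_gram_antipodal v w :
  special_gram (sphere_class v) = special_gram (sphere_class w) -> antipodal_rel v w.
Proof.
move=> e; apply: outer_eq_sign; apply: (@scalerI _ _ 4); first by rewrite pnatr_eq0.
have := etrans (esym (special_gram_sphere v)) (etrans e (special_gram_sphere w)).
by move=> /addrI /oppr_inj.
Qed.

Lemma special_gram_inj : injective special_gram.
Proof.
move=> q q'; have [v <-] := sphere_class_surj q; have [w <-] := sphere_class_surj q'.
by move/special_gram_antipodal; exact: sphere_class_antipodal.
Qed.

Definition RP2_to_special : RP2 R -> SpecialSubspace R := qlift (@sphere_class R).

Lemma RP2_to_special_qpi v : RP2_to_special (qpi antipodal_rel v) = sphere_class v.
Proof. exact: (qlift_qpi (@antipodal_rel_refl R) (@sphere_class_antipodal R)). Qed.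

Lemma RP2_to_special_continuous : continuous RP2_to_special.
Proof.
exact: (qlift_continuous (@antipodal_rel_refl R) (@sphere_class_antipodal R)
  sphere_class_continuous).
Qed.

Lemma RP2_to_special_inj : injective RP2_to_special.
Proof.
move=> A B; rewrite -(qrepK A) -(qrepK B) !RP2_to_special_qpi.
move=> /(congr1 special_gram) /special_gram_antipodal vw.
by apply/(qpi_eqP (@antipodal_rel_refl R) (@antipodal_rel_sym R) (@antipodal_rel_trans R)).
Qed.

Lemma RP2_to_special_surj q : exists A, RP2_to_special A = q.
Proof.
by have [v <-] := sphere_class_surj q; exists (qpi antipodal_rel v); exact: RP2_to_special_qpi.
Qed.

Lemma RP2_compact : compact [set: RP2 R].
Proof. exact/qspace_compact/set_type_compact/S2_compact. Qed.

Lemma special_hausdorff : hausdorff_space (SpecialSubspace R).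
Proof.
apply: (hausdorff_injective special_gram_continuous special_gram_inj).
exact: norm_hausdorff.
Qed.

End Topology.

Theorem mainTheorem13 (R : realType) :
  homeomorphic (SpecialSubspace R) (RP2 R).
Proof.
apply: homeomorphic_sym; apply: (compact_hausdorff_homeomorphic (f := @RP2_to_special R)).
- exact: RP2_compact.
- exact: special_hausdorff.
- exact: RP2_to_special_continuous.
- exact: RP2_to_special_inj.
- exact: RP2_to_special_surj.
Qed.
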